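(* Let $f_1,\dots,f_n$ be monotone non-identical linear functions. If a counterclockwise permutation $\sigma$ for them satisfies $f^\sigma\le f^{\sigma_1}$, $f^\sigma\le f^{\sigma_{n-1}}$ and $\theta(f_{\sigma(1)})\ne\theta(f^\sigma)$, then $\sigma$ is minimum.
   Context: A linear function is $f(x)=ax+b$; monotone means $a>0$; identical means $f(x)=x$. $\vec f=(b,1-a)^\top$ and $\theta(f)\in[0,2\pi)$ is its polar angle ($\bot$ if $\vec f=0$). For a permutation $\sigma$ of $[n]$, $f^\sigma=f_{\sigma(n)}\circ\cdots\circ f_{\sigma(1)}$; $\sigma$ is minimum if $f^\sigma\le f^\rho$ pointwise for all permutations $\rho$. $\sigma$ is counterclockwise if there is $k$ with $\theta(f_{\sigma(k)})\le\cdots\le\theta(f_{\sigma(n)})\le\theta(f_{\sigma(1)})\le\cdots\le\theta(f_{\sigma(k-1)})$. The $k$-shift is $\sigma_k(i)=\sigma(i+k)$ for $i\le n-k$, $\sigma_k(i)=\sigma(i+k-n)$ otherwise. *)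

From HB Require Import structures.
From mathcomp Require Import all_boot all_order all_algebra all_fingroup.
From mathcomp Require Import all_classical all_reals all_analysis.
Set Implicit Arguments. Unset Strict Implicit. Unset Printing Implicit Defensive.
Import Order.TTheory GRing.Theory Num.Theory.
Local Open Scope ring_scope.

Section LinFun.
Variable R : realType.
Definition linf := (R * R)%type.
Definition lf_a (f : linf) : R := f.1.
Definition lf_b (f : linf) : R := f.2.
Definition lf_eval (f : linf) (x : R) : R := lf_a f * x + lf_b f.

Definition monotone_lf (f : linf) : Prop := 0 < lf_a f.
Definition identical_lf (f : linf) : Prop := lf_a f = 1 /\ lf_b f = 0.

Definition lf_comp (g f : linf) : linf :=
  (lf_a g * lf_a f, lf_a g * lf_b f + lf_b g).
Definition lf_id : linf := (1, 0).

(* composition along a sequence s = [:: g1; ...; gm] : gm \o ... \o g1 *)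
Definition lf_comp_seq (s : seq linf) : linf :=
  foldl (fun acc g => lf_comp g acc) lf_id s.

Definition lf_vec (f : linf) : R * R := (lf_b f, 1 - lf_a f).

(* polar angle in [0, 2 pi) of a nonzero vector (value 0 at the zero vector) *)
Definition angle (v : R * R) : R :=
  let r := Num.sqrt (v.1 ^+ 2 + v.2 ^+ 2) in
  if 0 <= v.2 then acos (v.1 / r) else 2 * pi - acos (v.1 / r).

(* theta(f) : None stands for bottom (vec f = 0) *)
Definition theta (f : linf) : option R :=
  if lf_vec f == (0, 0) then None else Some (angle (lf_vec f)).

(* f^sigma = f_{sigma(n)} \o ... \o f_{sigma(1)} *)
Definition fperm n (F : 'I_n -> linf) (s : 'S_n) : linf :=
  lf_comp_seq [seq F (s i) | i <- enum 'I_n].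

(* f^{sigma_k}: the k-shift sigma_k lists sigma(k+1),...,sigma(n),sigma(1),...,sigma(k) *)
Definition fshift n (F : 'I_n -> linf) (s : 'S_n) (k : nat) : linf :=
  lf_comp_seq (rot k [seq F (s i) | i <- enum 'I_n]).

Definition lf_le (f g : linf) : Prop := forall x : R, lf_eval f x <= lf_eval g x.

Definition is_minimum n (F : 'I_n -> linf) (s : 'S_n) : Prop :=
  forall r : 'S_n, lf_le (fperm F s) (fperm F r).

(* counterclockwise: for some k (1-indexed start sigma(k), i.e. rotation by k-1),
   theta(f_{sigma(k)}) <= ... <= theta(f_{sigma(n)}) <= theta(f_{sigma(1)}) <= ... *)
Definition counterclockwise n (F : 'I_n -> linf) (s : 'S_n) : Prop :=
  exists2 k : nat, (k < n)%N &
    sorted (fun x y : R => x <= y)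
      (rot k [seq angle (lf_vec (F (s i))) | i <- enum 'I_n]).
End LinFun.

(* For maps with positive slopes all orderings have the same slope, so they are compared
   through their intercepts, and exchanging two blocks [P ++ Q] into [Q ++ P] changes the
   intercept by the cross product of the vectors [(b, 1 - a)] of the two composites.
   Lift the arguments of the vectors along the counterclockwise order to reals.  The
   comparisons with the first and last rotation, together with the angle condition, put
   all lifted arguments within a half-turn of an argument [psi] of the total vector; then
   every split [P ++ Q] has a nonnegative cross product, so the order is minimal among its
   rotations.  Conversely, by induction on the length, every ordering is dominated by some
   rotation of the counterclockwise one: insert its first function into a
   rotation-minimal ordering of the others, at its counterclockwise place, on the side of
   [psi] dictated by its argument. *)

From mathcomp Require Import all_boot all_order all_algebra all_fingroup.
From mathcomp Require Import all_classical all_reals all_analysis.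
From mathcomp Require Import ring lra.
Import Order.TTheory GRing.Theory Num.Theory.
Local Open Scope ring_scope.

Set Implicit Arguments. Unset Strict Implicit. Unset Printing Implicit Defensive.

Section Cross.
Variable R : comPzRingType.
Implicit Types u v w : R * R.

Definition cross u v : R := u.1 * v.2 - u.2 * v.1.

Lemma crossNC u v : cross u v = - cross v u.
Proof. rewrite /cross; ring. Qed.

Lemma crossNr u v : cross u (- v.1, - v.2) = - cross u v.
Proof. rewrite /cross /=; ring. Qed.

End Cross.

Section Composition.
Variable R : realType.
Implicit Types (f g h : linf R) (l P Q : seq (linf R)).

Definition pos_slope f : bool := 0 < f.1.
Definition seq_vec l := lf_vec (lf_comp_seq l).
Definition intercept l : R := (lf_comp_seq l).2.

Lemma lf_compA h g f : lf_comp h (lf_comp g f) = lf_comp (lf_comp h g) f.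
Proof. rewrite /lf_comp /lf_a /lf_b /=; congr (_, _); ring. Qed.

Lemma lf_comp_idr f : lf_comp f (lf_id R) = f.
Proof. by case: f => a b; rewrite /lf_comp /lf_a /lf_b /= mulr1 mulr0 add0r. Qed.

Lemma lf_comp_idl f : lf_comp (lf_id R) f = f.
Proof. by case: f => a b; rewrite /lf_comp /lf_a /lf_b /= !mul1r addr0. Qed.

Lemma foldl_lf_comp l f :
  foldl (fun acc g => lf_comp g acc) f l = lf_comp (lf_comp_seq l) f.
Proof.
elim: l f => [|g l IH] f /=; first by rewrite lf_comp_idl.
by rewrite IH {2}/lf_comp_seq /= IH lf_comp_idr lf_compA.
Qed.

Lemma lf_comp_seq_cons g l : lf_comp_seq (g :: l) = lf_comp (lf_comp_seq l) g.
Proof. by rewrite {1}/lf_comp_seq /= foldl_lf_comp lf_comp_idr. Qed.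

Lemma lf_comp_seq_cat P Q :
  lf_comp_seq (P ++ Q) = lf_comp (lf_comp_seq Q) (lf_comp_seq P).
Proof. by rewrite {1}/lf_comp_seq foldl_cat foldl_lf_comp. Qed.

Lemma lf_comp_seq1 f : lf_comp_seq [:: f] = f.
Proof. by rewrite lf_comp_seq_cons lf_comp_idl. Qed.

Lemma slope_lf_comp_seq l : (lf_comp_seq l).1 = \prod_(f <- l) f.1.
Proof.
elim: l => [|g l IH]; first by rewrite big_nil.
by rewrite lf_comp_seq_cons big_cons /= /lf_a IH mulrC.
Qed.

Lemma perm_slope_lf_comp_seq P Q :
  perm_eq P Q -> (lf_comp_seq P).1 = (lf_comp_seq Q).1.
Proof. by move=> pPQ; rewrite !slope_lf_comp_seq (perm_big _ pPQ). Qed.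

Lemma slope_lf_comp_seq_gt0 l : all pos_slope l -> 0 < (lf_comp_seq l).1.
Proof. by move=> /allP l_pos; rewrite slope_lf_comp_seq big_seq prodr_gt0. Qed.

Lemma intercept_cons g l : intercept (g :: l) = (lf_comp_seq l).1 * g.2 + intercept l.
Proof. by rewrite /intercept lf_comp_seq_cons. Qed.

Lemma lf_vec_comp g f : lf_vec (lf_comp g f) =
  (g.1 * (lf_vec f).1 + (lf_vec g).1, g.1 * (lf_vec f).2 + (lf_vec g).2).
Proof. rewrite /lf_vec /lf_comp /lf_a /lf_b /=; congr (_, _); ring. Qed.

Lemma cross_lf_comp g f w :
  cross (lf_vec (lf_comp g f)) w = g.1 * cross (lf_vec f) w + cross (lf_vec g) w.
Proof. rewrite lf_vec_comp /cross /=; ring. Qed.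

Lemma intercept_lf_compC g f :
  (lf_comp g f).2 - (lf_comp f g).2 = - cross (lf_vec f) (lf_vec g).
Proof. rewrite /lf_comp /lf_vec /cross /lf_a /lf_b /=; ring. Qed.

Lemma intercept_catC_le P Q :
  (intercept (P ++ Q) <= intercept (Q ++ P)) = (0 <= cross (seq_vec P) (seq_vec Q)).
Proof.
by rewrite -subr_le0 /intercept !lf_comp_seq_cat intercept_lf_compC oppr_le0.
Qed.

Lemma cross_seq_vec_catl P Q :
  cross (seq_vec P) (seq_vec (P ++ Q)) = cross (seq_vec P) (seq_vec Q).
Proof. rewrite /seq_vec lf_comp_seq_cat lf_vec_comp /cross /=; ring. Qed.

Lemma cross_seq_vec_catr P Q :
  cross (seq_vec (P ++ Q)) (seq_vec Q) = (lf_comp_seq Q).1 * cross (seq_vec P) (seq_vec Q).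
Proof. rewrite /seq_vec lf_comp_seq_cat lf_vec_comp /cross /=; ring. Qed.

Lemma cross_seq_vec_ge0 w l : all pos_slope l ->
  {in l, forall f, 0 <= cross (lf_vec f) w} -> 0 <= cross (seq_vec l) w.
Proof.
elim: l => [|g l IH] /=.
  by move=> _ _; rewrite /cross /lf_vec /lf_id /lf_a /lf_b /= subrr !mul0r subrr.
case/andP=> g_pos l_pos gl_ge0; rewrite /seq_vec lf_comp_seq_cons cross_lf_comp.
apply: addr_ge0; last by apply: IH => // f lf; rewrite gl_ge0 // inE lf orbT.
by rewrite mulr_ge0 ?gl_ge0 ?mem_head // ltW ?slope_lf_comp_seq_gt0.
Qed.

Lemma cross_seq_vec_le0 w l : all pos_slope l ->
  {in l, forall f, cross (lf_vec f) w <= 0} -> cross (seq_vec l) w <= 0.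
Proof.
move=> l_pos l_le0; rewrite -oppr_ge0 -crossNr.
by apply: cross_seq_vec_ge0 => // f lf; rewrite crossNr oppr_ge0 l_le0.
Qed.

Lemma cross_seq_vec_eq0 w l : all pos_slope l ->
  {in l, forall f, cross (lf_vec f) w = 0} -> cross (seq_vec l) w = 0.
Proof.
move=> l_pos l_eq0; apply/eqP; rewrite eq_le.
rewrite cross_seq_vec_le0 ?cross_seq_vec_ge0 // => f lf; by rewrite l_eq0.
Qed.

Lemma lf_comp_seq_eq P Q : perm_eq P Q -> intercept P = intercept Q ->
  lf_comp_seq P = lf_comp_seq Q.
Proof.
move=> /perm_slope_lf_comp_seq; rewrite /intercept.
by case: (lf_comp_seq P) (lf_comp_seq Q) => [? ?] [? ?] /= -> ->.
Qed.

Lemma lf_le_intercept f g : lf_le f g -> f.2 <= g.2.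
Proof. by move=> /(_ 0); rewrite /lf_eval !mulr0 !add0r. Qed.

Lemma intercept_le_lf_le P Q : perm_eq P Q -> intercept P <= intercept Q ->
  lf_le (lf_comp_seq P) (lf_comp_seq Q).
Proof.
by move=> /perm_slope_lf_comp_seq PQ_slope PQ x; rewrite /lf_eval /lf_a /lf_b PQ_slope lerD2l.
Qed.

Lemma lf_vec_neq0 f : ~ identical_lf f -> lf_vec f != (0, 0).
Proof.
move=> f_nid; apply/eqP => -[b0 a1]; apply: f_nid; split => //.
by apply/eqP; rewrite -subr_eq0 -opprB oppr_eq0 a1.
Qed.

Lemma lf_comp_seq_rot l j : cross (seq_vec (take j l)) (seq_vec (drop j l)) = 0 ->
  lf_comp_seq (rot j l) = lf_comp_seq l.
Proof.
move=> c0; apply: lf_comp_seq_eq; first by rewrite perm_rot.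
rewrite /rot -[in RHS](cat_take_drop j l); apply/eqP; rewrite eq_le !intercept_catC_le.
by rewrite c0 crossNC c0 oppr0 lexx.
Qed.

End Composition.
Arguments pos_slope {R}.
Arguments seq_vec {R}.
Arguments intercept {R}.

Section Argument.
Variable R : realType.
Implicit Types (u v w : R * R) (a b p : R).

Definition is_arg v p : Prop := exists2 r : R, 0 < r & v = (r * cos p, r * sin p).

Definition dot u v : R := u.1 * v.1 + u.2 * v.2.

Lemma cross_is_arg u v a b : is_arg u a -> is_arg v b ->
  exists2 k : R, 0 < k & cross u v = k * sin (b - a).
Proof.
move=> [r r_gt0 ->] [s s_gt0 ->]; exists (r * s); first exact: mulr_gt0.
rewrite /cross /= sinB; ring.
Qed.

Lemma dot_is_arg u v a b : is_arg u a -> is_arg v b ->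
  exists2 k : R, 0 < k & dot u v = k * cos (b - a).
Proof.
move=> [r r_gt0 ->] [s s_gt0 ->]; exists (r * s); first exact: mulr_gt0.
rewrite /dot /= cosB; ring.
Qed.

Lemma is_arg_neq0 v p : is_arg v p -> v != (0, 0).
Proof.
move=> [r r_gt0 ->]; apply/eqP => -[/eqP + /eqP]; rewrite !mulf_eq0 (gt_eqF r_gt0) /=.
move=> /eqP c0 /eqP s0; have := cos2Dsin2 p.
by rewrite c0 s0 expr0n add0r => /eqP; rewrite eq_sym oner_eq0.
Qed.

Definition codirected u v : bool := (cross u v == 0) && (0 < dot u v).

Lemma is_arg_codirected u v p : is_arg u p -> is_arg v p -> codirected u v.
Proof.
move=> up vp; rewrite /codirected.
have [k1 _ ->] := cross_is_arg up vp; have [k2 k2_gt0 ->] := dot_is_arg up vp.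
by rewrite subrr sin0 cos0 mulr0 mulr1 eqxx k2_gt0.
Qed.

Lemma cross_ge0_is_arg u v a b : is_arg u a -> is_arg v b ->
  (0 <= cross u v) = (0 <= sin (b - a)).
Proof. by move=> ua vb; case: (cross_is_arg ua vb) => k k_gt0 ->; rewrite pmulr_rge0. Qed.

Lemma cross_le0_is_arg u v a b : is_arg u a -> is_arg v b ->
  (cross u v <= 0) = (sin (b - a) <= 0).
Proof. by move=> ua vb; case: (cross_is_arg ua vb) => k k_gt0 ->; rewrite pmulr_rle0. Qed.

Lemma sin_le0_pi p : - pi <= p <= 0 -> sin p <= 0.
Proof.
move=> /andP[Np_le p_le0]; rewrite -(opprK p) sinN oppr_le0 sin_ge0_pi //.
by rewrite oppr_ge0 p_le0 lerNl.
Qed.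

Lemma sin_lt0_2pi p : pi < p < pi *+ 2 -> sin p < 0.
Proof.
move=> /andP[pi_lt_p p_lt_2pi]; rewrite -(subrK pi p) sinDpi oppr_lt0 sin_gt0_pi //.
by rewrite subr_gt0 pi_lt_p ltrBlDr -mulr2n.
Qed.

Lemma is_arg_addn v p k : is_arg v (p + pi *+ 2 *+ k) <-> is_arg v p.
Proof. by rewrite /is_arg (periodicn (@cosD2pi R)) (periodicn (@sinD2pi R)). Qed.

Lemma is_arg_subn v p k : is_arg v (p - pi *+ 2 *+ k) <-> is_arg v p.
Proof. by rewrite -(is_arg_addn _ _ k) subrK. Qed.

Lemma is_arg_window v p a : is_arg v p -> exists2 q, is_arg v q & a <= q < a + pi *+ 2.
Proof.
move=> vp; pose T : R := pi *+ 2; have T_gt0 : 0 < T by rewrite mulrn_wgt0 ?pi_gt0.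
pose m := Num.floor ((p - a) / T); exists (p - T *~ m).
  by case: m => k; rewrite ?NegzE ?mulrNz ?opprK ?is_arg_addn ?is_arg_subn.
have /andP[m_le m_gt] := floor_itv ((p - a) / T).
rewrite -/m ler_pdivlMr // in m_le.
rewrite -/m ltr_pdivrMr // intrD mulrDl mul1r in m_gt.
rewrite -mulrzl -/T; apply/andP; split; lra.
Qed.

Lemma norm2_gt0 v : v != (0, 0) -> 0 < v.1 ^+ 2 + v.2 ^+ 2.
Proof.
case: v => x y /= v_neq0; rewrite lt_def addr_ge0 ?sqr_ge0 // andbT.
by rewrite paddr_eq0 ?sqr_ge0 // !sqrf_eq0; apply: contra v_neq0 => /andP[/eqP-> /eqP->].
Qed.

Lemma angle_cos_itv v : v != (0, 0) ->
  -1 <= v.1 / Num.sqrt (v.1 ^+ 2 + v.2 ^+ 2) <= 1.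
Proof.
move=> /norm2_gt0 n_gt0; have r_gt0 : 0 < Num.sqrt (v.1 ^+ 2 + v.2 ^+ 2) by rewrite sqrtr_gt0.
rewrite -ler_norml normrM normfV (gtr0_norm r_gt0) ler_pdivrMr // mul1r.
by rewrite -sqrtr_sqr ler_sqrt ?addr_ge0 ?sqr_ge0 // lerDl sqr_ge0.
Qed.

Lemma angle_is_arg v : v != (0, 0) -> is_arg v (angle v).
Proof.
move=> v_neq0; have c_itv := angle_cos_itv v_neq0; have := norm2_gt0 v_neq0.
case: v v_neq0 c_itv => x y /= v_neq0 c_itv n_gt0.
set r := Num.sqrt (x ^+ 2 + y ^+ 2) in c_itv *.
have r_gt0 : 0 < r by rewrite sqrtr_gt0.
have r2 : r ^+ 2 = x ^+ 2 + y ^+ 2 by rewrite sqr_sqrtr // ltW.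
have r_sin : r * Num.sqrt (1 - (x / r) ^+ 2) = `|y|.
  have -> : 1 - (x / r) ^+ 2 = (y / r) ^+ 2.
    by rewrite !expr_div_n r2; field; rewrite -r2 sqrf_eq0 gt_eqF.
  by rewrite sqrtr_sqr normrM normfV (gtr0_norm r_gt0) mulrC mulfVK ?gt_eqF.
have r_cos : r * (x / r) = x by rewrite mulrC mulfVK ?gt_eqF.
rewrite /angle /= -/r; exists r => //; case: ifP => y_ge0.
  by rewrite acosK ?inE // sin_acos //; congr (_, _); rewrite ?r_cos ?r_sin ?ger0_norm.
rewrite mulr_natl cosB sinB cos2pi sin2pi !mul1r !mul0r addr0 sub0r acosK ?inE //.
by rewrite sin_acos // mulrN r_sin ltr0_norm ?opprK ?r_cos // ltNge y_ge0.
Qed.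

Lemma angle_itv v : v != (0, 0) -> 0 <= angle v < pi *+ 2.
Proof.
move=> v_neq0; have c_itv := angle_cos_itv v_neq0; have := norm2_gt0 v_neq0.
case: v v_neq0 c_itv => x y /= v_neq0 c_itv n_gt0.
set r := Num.sqrt (x ^+ 2 + y ^+ 2) in c_itv *.
have r_gt0 : 0 < r by rewrite sqrtr_gt0.
have pi_gt0 := pi_gt0 R; have acos_le := acos_lepi c_itv.
rewrite /angle /= -/r mulr_natl; case: ifP => y_ge0.
  by rewrite acos_ge0 //= (le_lt_trans acos_le) // mulr2n ltrDl.
suff : 0 < acos (x / r) by move=> acos_gt0; apply/andP; split; lra.
rewrite acos_gt0 // (andP c_itv).1 /= lt_neqAle (andP c_itv).2 andbT.
apply/eqP => x_r; move: y_ge0; suff -> : y = 0 by rewrite lexx.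
have x_eq : x = r by rewrite -[x](divfK (lt0r_neq0 r_gt0)) x_r mul1r.
have r2 : r ^+ 2 = x ^+ 2 + y ^+ 2 by rewrite sqr_sqrtr // ltW.
have : y ^+ 2 = 0 by rewrite x_eq in r2; lra.
by move/eqP; rewrite sqrf_eq0 => /eqP.
Qed.

Lemma is_arg_angle_eq v w p : is_arg v p -> is_arg w p -> angle v = angle w.
Proof.
suff angle_arg u : is_arg u p ->
    angle u = if 0 <= sin p then acos (cos p) else 2 * pi - acos (cos p).
  by move=> /angle_arg -> /angle_arg ->.
move=> [r r_gt0 ->]; rewrite /angle /= !exprMn -mulrDr cos2Dsin2 mulr1.
by rewrite sqrtr_sqr gtr0_norm // [r * cos p]mulrC mulfK ?gt_eqF // pmulr_rge0.
Qed.

End Argument.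

Section Lifting.
Variable R : realType.
Notation item := (linf R * R)%type.
Implicit Types (x y e : item) (s A B X Y : seq item).

(* An item pairs a function with a real lift of the argument of its vector; in a lifted
   list these lifts increase and all lie within one turn of each other. *)
Definition lift_ok x : Prop := pos_slope x.1 /\ is_arg (lf_vec x.1) x.2.
Definition within_turn x y : bool := (x.2 <= y.2) && (y.2 <= x.2 + pi *+ 2).
Definition lifted s : Prop := {in s, forall x, lift_ok x} /\ pairwise within_turn s.
Definition add_turn x : item := (x.1, x.2 + pi *+ 2).
Definition lift_rot k s := drop k s ++ map add_turn (take k s).

Lemma map_fst_add_turn s : map fst (map add_turn s) = map fst s.
Proof. by rewrite -map_comp. Qed.

Lemma map_fst_lift_rot k s : map fst (lift_rot k s) = rot k (map fst s).
Proof. by rewrite /lift_rot map_cat map_fst_add_turn map_drop map_take. Qed.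

Lemma lift_ok_pos_slope s : {in s, forall x, lift_ok x} -> all pos_slope (map fst s).
Proof. by move=> s_ok; apply/allP => f /mapP[x /s_ok[x_pos _] ->]. Qed.

Lemma within_turn_refl x : within_turn x x.
Proof. by rewrite /within_turn lexx lerDl mulrn_wge0 // pi_ge0. Qed.

Lemma lifted_head_turn x s : lifted (x :: s) -> {in x :: s, forall z, within_turn x z}.
Proof.
case=> _ /= /andP[/allP x_s _] z; rewrite inE => /predU1P[->|/x_s //].
exact: within_turn_refl.
Qed.

Lemma lifted_last_turn x s : lifted (x :: s) -> {in x :: s, forall z, within_turn z (last x s)}.
Proof.
case=> _; rewrite lastI pairwise_rcons => /andP[/allP s_last _] z.
by rewrite mem_rcons inE => /predU1P[->|/s_last //]; exact: within_turn_refl.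
Qed.

Lemma lifted_cat_cons_turn X e Y : lifted (X ++ e :: Y) ->
  {in X, forall x, within_turn x e} /\ {in Y, forall y, within_turn e y}.
Proof.
case=> _; rewrite pairwise_cat /= => /and4P[/allrelP XeY _ /allP eY _]; split => [x xX|//].
by apply: XeY; rewrite ?mem_head.
Qed.

Lemma lifted_subseq s1 s2 : subseq s1 s2 -> lifted s2 -> lifted s1.
Proof.
move=> sub12 [s2_ok s2_turn]; split; last exact: subseq_pairwise s2_turn.
by move=> x /(mem_subseq sub12); apply: s2_ok.
Qed.

Lemma lifted_cat_cons A e B : lifted (A ++ e :: B) -> lifted (A ++ B).
Proof. by apply: lifted_subseq; rewrite subseq_cat2l subseq_cons. Qed.

Lemma lifted_lift_rot k s : lifted s -> lifted (lift_rot k s).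
Proof.
case=> s_ok s_turn; split.
  move=> x; rewrite mem_cat => /orP[/mem_drop/s_ok //|/mapP[y /mem_take/s_ok[y_pos y_arg] ->]].
  by split => //=; apply/(is_arg_addn _ _ 1).
move: s_turn; rewrite -{1}(cat_take_drop k s) /lift_rot !pairwise_cat.
case/and3P=> turn_td turn_t turn_d; rewrite pairwise_map turn_d (sub_pairwise _ turn_t); last first.
  by move=> x y; rewrite /relpre /within_turn /= lerD2r addrAC lerD2r.
rewrite !andbT; apply/allrelP => y _ y_d /mapP[z z_t ->].
move/allrelP: turn_td => /(_ z y z_t y_d) /andP[zy yz].
by rewrite /within_turn /= yz lerD2r.
Qed.

Lemma lift_rot_insert A e B j : (j <= size A + size B)%N ->
  exists X Y e' k, [/\ lift_rot k (A ++ e :: B) = X ++ e' :: Y, e'.1 = e.1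
    & map fst (X ++ Y) = rot j (map fst (A ++ B))].
Proof.
move=> j_le; case: (leqP j (size A)) => [j_leA|j_gtA].
  rewrite -(cat_take_drop j A); set A1 := take j A; set A2 := drop j A.
  have sA1 : size A1 = j by rewrite size_take_min; apply/minn_idPl.
  exists A2, (B ++ map add_turn A1), e, j; split => //.
    by rewrite /lift_rot -catA -{1 2}sA1 drop_size_cat // take_size_cat // -catA.
  by rewrite !map_cat map_fst_add_turn -catA -sA1 -(size_map fst A1) rot_size_cat catA.
pose i := (j - size A)%N; rewrite -(cat_take_drop i B).
set B1 := take i B; set B2 := drop i B.
have sB1 : size B1 = i by rewrite size_take_min; apply/minn_idPl; rewrite leq_subLR.
exists (B2 ++ map add_turn A), (map add_turn B1), (add_turn e), (size A + i).+1; split => //.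
  have -> : A ++ e :: B1 ++ B2 = (A ++ e :: B1) ++ B2 by rewrite -catA.
  have sAeB1 : size (A ++ e :: B1) = (size A + i).+1 by rewrite size_cat /= sB1 addnS.
  by rewrite /lift_rot -sAeB1 drop_size_cat // take_size_cat // map_cat /= -catA.
rewrite !map_cat !map_fst_add_turn catA.
have -> : j = size (map fst A ++ map fst B1) by rewrite size_cat !size_map sB1 subnKC // ltnW.
by rewrite rot_size_cat -catA.
Qed.

End Lifting.
Arguments within_turn {R}.
Arguments add_turn {R}.

Section RotationMinimality.
Variable R : realType.
Notation item := (linf R * R)%type.
Implicit Types (x : item) (s : seq item) (f : linf R) (l P Q : seq (linf R)).

Definition rot_minimal l : Prop := forall k, intercept l <= intercept (rot k l).

Lemma intercept_le_rcons_cross f l : intercept (f :: l) <= intercept (rcons l f) ->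
  0 <= cross (lf_vec f) (seq_vec (f :: l)).
Proof.
rewrite -cats1 -cat1s intercept_catC_le -cross_seq_vec_catl.
by rewrite /seq_vec lf_comp_seq1.
Qed.

Lemma intercept_le_cons_cross l f : pos_slope f ->
  intercept (rcons l f) <= intercept (f :: l) -> 0 <= cross (seq_vec (rcons l f)) (lf_vec f).
Proof.
rewrite -cats1 -cat1s intercept_catC_le => f_pos lf_ge0.
have vf : seq_vec [:: f] = lf_vec f by rewrite /seq_vec lf_comp_seq1.
by rewrite -vf cross_seq_vec_catr lf_comp_seq1 mulr_ge0 // ltW.
Qed.

Lemma rot_minimal_rot l j : rot_minimal l -> intercept (rot j l) = intercept l ->
  rot_minimal (rot j l).
Proof. by move=> lmin lj k; rewrite lj rot_rot_add. Qed.

Lemma exists_rot_argmin l :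
  exists2 j, (j <= size l)%N & forall k, intercept (rot j l) <= intercept (rot k l).
Proof.
pose F (i : 'I_(size l).+1) := intercept (rot i l).
have [j _ j_min] := arg_minP F (i0 := ord0) (P := xpredT) isT.
exists j; first by rewrite -ltnS.
move=> k; rewrite [rot k l]rot_minn.
by have := j_min (inord (minn k (size l))) isT; rewrite /F inordK // ltnS geq_minr.
Qed.

Lemma rot_minimal_vec0 l : seq_vec l = (0, 0) -> rot_minimal l.
Proof.
move=> l0 c; rewrite /rot -{1}(cat_take_drop c l) intercept_catC_le.
by rewrite -cross_seq_vec_catl cat_take_drop l0 /cross !mulr0 subrr.
Qed.

Lemma cross_seq_vec_ge0_near s W psi : {in s, forall x, lift_ok x} -> is_arg W psi ->
  {in s, forall x, psi - pi <= x.2 <= psi} -> 0 <= cross (seq_vec (map fst s)) W.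
Proof.
move=> s_ok W_psi s_near; apply: cross_seq_vec_ge0 => [|f /mapP[x xs ->]].
  exact: lift_ok_pos_slope.
have [_ x_arg] := s_ok x xs; have /andP[x_ge x_le] := s_near x xs.
by rewrite (cross_ge0_is_arg x_arg W_psi) sin_ge0_pi //; apply/andP; split; lra.
Qed.

Lemma cross_seq_vec_le0_near s W psi : {in s, forall x, lift_ok x} -> is_arg W psi ->
  {in s, forall x, psi <= x.2 <= psi + pi} -> cross (seq_vec (map fst s)) W <= 0.
Proof.
move=> s_ok W_psi s_near; apply: cross_seq_vec_le0 => [|f /mapP[x xs ->]].
  exact: lift_ok_pos_slope.
have [_ x_arg] := s_ok x xs; have /andP[x_ge x_le] := s_near x xs.
by rewrite (cross_le0_is_arg x_arg W_psi) sin_le0_pi //; apply/andP; split; lra.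
Qed.

Lemma lifted_args_near x s W psi : lifted (x :: s) -> is_arg W psi ->
  x.2 < psi < x.2 + pi *+ 2 ->
  0 <= cross (lf_vec x.1) W -> 0 <= cross W (lf_vec (last x s).1) ->
  {in x :: s, forall z, psi - pi <= z.2 <= psi + pi}.
Proof.
move=> s_lift W_psi /andP[x_lt x_gt] xW Wlast; have pi_gt0 := pi_gt0 R.
have [s_ok _] := s_lift.
have [_ x_arg] := s_ok x (mem_head _ _); have [_ last_arg] := s_ok _ (mem_last x s).
have /andP[x_last last_x] := lifted_head_turn s_lift (mem_last x s).
have psi_x : psi - x.2 <= pi.
  rewrite leNgt; apply/negP => pi_lt; move: xW.
  by rewrite (cross_ge0_is_arg x_arg W_psi) leNgt sin_lt0_2pi // pi_lt /=; lra.
have last_psi : (last x s).2 - psi <= pi.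
  rewrite leNgt; apply/negP => pi_lt; move: Wlast.
  by rewrite (cross_ge0_is_arg W_psi last_arg) leNgt sin_lt0_2pi // pi_lt /=; lra.
move=> z zs; have /andP[xz _] := lifted_head_turn s_lift zs.
have /andP[z_last _] := lifted_last_turn s_lift zs.
by apply/andP; split; lra.
Qed.

Lemma rot_minimal_near s psi : lifted s -> is_arg (seq_vec (map fst s)) psi ->
  {in s, forall x, psi - pi <= x.2 <= psi + pi} -> rot_minimal (map fst s).
Proof.
move=> [s_ok s_turn] W_psi s_near c; set W := seq_vec _ in W_psi.
rewrite /rot -{1}(cat_take_drop c (map fst s)) intercept_catC_le -!(map_take, map_drop).
set P := take c s; set Q := drop c s.
have P_ok : {in P, forall x, lift_ok x} by move=> x /mem_take/s_ok.
have Q_ok : {in Q, forall x, lift_ok x} by move=> x /mem_drop/s_ok.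
have W_PQ : map fst s = map fst P ++ map fst Q by rewrite -map_cat cat_take_drop.
have [P_le|] := boolP (all (fun x => x.2 <= psi) P).
  rewrite -cross_seq_vec_catl -W_PQ (cross_seq_vec_ge0_near P_ok W_psi) // => x xP.
  by rewrite (allP P_le x xP) andbT; case/andP: (s_near x (mem_take xP)).
rewrite -has_predC => /hasP[z zP /=]; rewrite -ltNge => psi_lt.
have turn_PQ : allrel within_turn P Q.
  by move: s_turn; rewrite -{1}(cat_take_drop c s) pairwise_cat => /and3P[].
have Q_near : {in Q, forall x, psi <= x.2 <= psi + pi}.
  move=> x xQ; have /andP[zx _] := allrelP turn_PQ z x zP xQ.
  have /andP[_ x_le] := s_near x (mem_drop xQ).
  by rewrite x_le andbT (le_trans (ltW psi_lt)).
have := cross_seq_vec_le0_near Q_ok W_psi Q_near.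
rewrite crossNC oppr_le0 /W W_PQ cross_seq_vec_catr pmulr_rge0 //.
by rewrite slope_lf_comp_seq_gt0 // lift_ok_pos_slope.
Qed.

End RotationMinimality.
Arguments rot_minimal {R}.

Section Insertion.
Variable R : realType.
Notation item := (linf R * R)%type.
Implicit Types (x e : item) (X Y : seq item) (f g h : linf R) (l P Q : seq (linf R)).

Lemma ler_lf_comp_intercept2l g f f' : 0 < g.1 ->
  ((lf_comp g f).2 <= (lf_comp g f').2) = (f.2 <= f'.2).
Proof. by move=> g_pos; rewrite /lf_comp /lf_a /lf_b /= lerD2r ler_pM2l. Qed.

Lemma ler_lf_comp_intercept2r g g' f : g.1 = g'.1 ->
  ((lf_comp g f).2 <= (lf_comp g' f).2) = (g.2 <= g'.2).
Proof. by move=> gg'; rewrite /lf_comp /lf_a /lf_b /= gg' lerD2l. Qed.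

Lemma intercept_insert_le_l P f Q : all pos_slope Q ->
  0 <= cross (seq_vec P) (lf_vec f) -> intercept (P ++ f :: Q) <= intercept (f :: P ++ Q).
Proof.
move=> Q_pos Pf; rewrite /intercept !lf_comp_seq_cons !lf_comp_seq_cat lf_comp_seq_cons -!lf_compA.
by rewrite ler_lf_comp_intercept2l ?slope_lf_comp_seq_gt0 // -subr_le0 intercept_lf_compC oppr_le0.
Qed.

Lemma intercept_insert_le_r P f Q : cross (seq_vec Q) (lf_vec f) <= 0 ->
  0 <= cross (seq_vec (P ++ Q)) (lf_vec f) -> intercept (P ++ f :: Q) <= intercept (f :: P ++ Q).
Proof.
move=> Qf PQf; rewrite /intercept lf_comp_seq_cons lf_comp_seq_cat lf_comp_seq_cons.
apply: (@le_trans _ _ (lf_comp f (lf_comp_seq (P ++ Q))).2).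
  rewrite lf_comp_seq_cat !lf_compA ler_lf_comp_intercept2r /= ?[_ * f.1]mulrC //.
  by rewrite -subr_le0 intercept_lf_compC -crossNC.
by rewrite -subr_le0 intercept_lf_compC oppr_le0.
Qed.

(* If [e.2 <= psi], moving [e] leftwards past [X] does not increase the intercept, since
   [X] lies within a half-turn clockwise of [e]; otherwise [Y] lies within a half-turn
   counterclockwise of [e], and [e] can be moved past [Y] and then past all of [X ++ Y]. *)
Lemma intercept_insert_le_near X e Y psi : lifted (X ++ e :: Y) -> Y != [::] ->
  is_arg (seq_vec (map fst (X ++ Y))) psi ->
  {in X ++ Y, forall x, psi - pi <= x.2 <= psi + pi} ->
  intercept (map fst (X ++ e :: Y)) <= intercept (e.1 :: map fst (X ++ Y)).
Proof.
move=> s_lift Y_neq0 W_psi s_near; have [s_ok _] := s_lift; have pi_gt0 := pi_gt0 R.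
have [Xe eY] := lifted_cat_cons_turn s_lift.
have [_ e_arg] : lift_ok e by apply: s_ok; rewrite mem_cat mem_head orbT.
have X_ok : {in X, forall x, lift_ok x} by move=> x xX; apply: s_ok; rewrite mem_cat xX.
have Y_ok : {in Y, forall y, lift_ok y}.
  by move=> y yY; apply: s_ok; rewrite mem_cat inE yY !orbT.
have X_near x : x \in X -> psi - pi <= x.2 <= psi + pi.
  by move=> xX; apply: s_near; rewrite mem_cat xX.
have Y_near y : y \in Y -> psi - pi <= y.2 <= psi + pi.
  by move=> yY; apply: s_near; rewrite mem_cat yY orbT.
rewrite !map_cat /=; have [e_le|psi_lt] := leP e.2 psi.
  apply: intercept_insert_le_l; first exact: lift_ok_pos_slope.
  apply: (cross_seq_vec_ge0_near X_ok e_arg) => x xX.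
  have /andP[xe _] := Xe x xX; have /andP[x_ge _] := X_near x xX.
  by apply/andP; split; lra.
have e_le : e.2 <= psi + pi.
  have [y yY] : exists y, y \in Y by case: (Y) Y_neq0 => // y ? _; exists y; apply: mem_head.
  have /andP[ey _] := eY y yY; have /andP[_ y_le] := Y_near y yY.
  lra.
apply: intercept_insert_le_r.
  apply: (cross_seq_vec_le0_near Y_ok e_arg) => y yY.
  have /andP[ey _] := eY y yY; have /andP[_ y_le] := Y_near y yY.
  by apply/andP; split; lra.
rewrite -map_cat (cross_ge0_is_arg W_psi e_arg) sin_ge0_pi //.
by apply/andP; split; lra.
Qed.

Lemma rot_insert_le_noncodirected X e Y : lifted (X ++ e :: Y) ->
  rot_minimal (map fst (X ++ Y)) -> seq_vec (map fst (X ++ Y)) != (0, 0) ->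
  (X != [::] -> ~~ codirected (lf_vec (head e X).1) (seq_vec (map fst (X ++ Y)))) ->
  exists k, intercept (rot k (map fst (X ++ e :: Y))) <= intercept (e.1 :: map fst (X ++ Y)).
Proof.
case: X => [|x X] s_lift rmin W_neq0 x_nc; first by exists 0%N; rewrite rot0.
case/lastP: Y s_lift rmin W_neq0 x_nc => [|Y y] s_lift rmin W_neq0 x_nc.
  by exists (size (x :: X)); rewrite map_cat -(size_map fst) rot_size_cat cats0.
exists 0%N; rewrite rot0; have [s_ok _] := s_lift.
have [_ x_arg] := s_ok x (mem_head _ _).
have [y_pos _] : lift_ok y by apply: s_ok; rewrite mem_cat !inE -cats1 mem_cat inE eqxx !orbT.
have [psi W_psi /andP[x_le x_gt]] := is_arg_window x.2 (angle_is_arg W_neq0).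
have x_lt : x.2 < psi.
  rewrite lt_neqAle x_le andbT; apply: contraNneq (x_nc isT) => x_psi.
  by apply: (is_arg_codirected x_arg); rewrite x_psi.
apply: (intercept_insert_le_near s_lift _ W_psi); first by rewrite -size_eq0 size_rcons.
apply: (lifted_args_near (lifted_cat_cons s_lift) W_psi); first by rewrite x_lt x_gt.
  by apply: intercept_le_rcons_cross; have := rmin 1; rewrite /= rot1_cons.
have fst_rcons : map fst ((x :: X) ++ rcons Y y) = rcons (map fst ((x :: X) ++ Y)) y.1.
  by rewrite -!cats1 !map_cat catA.
rewrite last_cat last_rcons fst_rcons in rmin *; apply: intercept_le_cons_cross => //.
by have := rmin (size (map fst ((x :: X) ++ Y))); rewrite -cats1 rot_size_cat.
Qed.

Lemma cross_seq_vec_codirected l W : all pos_slope l ->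
  {in l, forall f, codirected (lf_vec f) W} -> cross (seq_vec l) W = 0.
Proof. by move=> l_pos l_cod; apply: cross_seq_vec_eq0 => // f /l_cod /andP[/eqP]. Qed.

(* Rotate past the longest prefix codirected with the total vector: it commutes with the rest. *)
Lemma rot_noncodirected l f0 : all pos_slope l ->
  has (fun f => ~~ codirected (lf_vec f) (seq_vec l)) l ->
  exists j, [/\ (j < size l)%N, lf_comp_seq (rot j l) = lf_comp_seq l
    & ~~ codirected (lf_vec (head f0 (rot j l))) (seq_vec l)].
Proof.
move=> l_pos l_nc; pose nc f := ~~ codirected (lf_vec f) (seq_vec l); pose j := find nc l.
have j_lt : (j < size l)%N by rewrite -has_find.
have take_cod : {in take j l, forall f, codirected (lf_vec f) (seq_vec l)}.
  move=> f f_take; apply/negPn/negP => nc_f.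
  have : has nc (take j l) by apply/hasP; exists f.
  by move/find_ltn; rewrite ltnn.
exists j; split => //.
  apply: lf_comp_seq_rot; rewrite -cross_seq_vec_catl cat_take_drop cross_seq_vec_codirected //.
  by move: l_pos; rewrite -{1}(cat_take_drop j l) all_cat => /andP[].
rewrite /rot -nth0 nth_cat size_drop subn_gt0 j_lt nth_drop addn0.
exact: (nth_find f0 l_nc).
Qed.

Lemma rot_insert_le X e Y : lifted (X ++ e :: Y) -> rot_minimal (map fst (X ++ Y)) ->
  exists k, intercept (rot k (map fst (X ++ e :: Y))) <= intercept (e.1 :: map fst (X ++ Y)).
Proof.
move=> s_lift rmin; have [XY_ok _] := lifted_cat_cons s_lift.
have l_pos := lift_ok_pos_slope XY_ok; set l := map fst (X ++ Y) in rmin l_pos *.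
have l_cat : l = map fst X ++ map fst Y by rewrite /l map_cat.
have [XY0|XY_neq0] := eqVneq (cross (seq_vec (map fst X)) (seq_vec (map fst Y))) 0.
  exists (size X); rewrite map_cat /= -(size_map fst X) rot_size_cat /=.
  have := @lf_comp_seq_rot _ l (size (map fst X)).
  rewrite l_cat take_size_cat // drop_size_cat // rot_size_cat => /(_ XY0) YX_l.
  by rewrite /intercept !lf_comp_seq_cons YX_l.
have XW : cross (seq_vec (map fst X)) (seq_vec l) =
    cross (seq_vec (map fst X)) (seq_vec (map fst Y)) by rewrite l_cat cross_seq_vec_catl.
have l_nc : has (fun f => ~~ codirected (lf_vec f) (seq_vec l)) l.
  apply: contraNT XY_neq0 => /hasPn l_cod; rewrite -XW.
  move: l_pos; rewrite l_cat all_cat => /andP[X_pos _].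
  rewrite cross_seq_vec_codirected // => f fX.
  by move: (l_cod f); rewrite l_cat mem_cat fX negbK => /(_ isT).
have [j [j_lt l_rot j_nc]] := rot_noncodirected e.1 l_pos l_nc.
have j_le : (j <= size X + size Y)%N by rewrite -size_cat -(size_map fst) ltnW.
have [X' [Y' [e' [k [rot_eq e'E fst_eq]]]]] := lift_rot_insert e j_le.
have s'_lift : lifted (X' ++ e' :: Y') by rewrite -rot_eq; apply: lifted_lift_rot.
have W'E : seq_vec (map fst (X' ++ Y')) = seq_vec l by rewrite fst_eq /seq_vec l_rot.
have rmin' : rot_minimal (map fst (X' ++ Y')).
  by rewrite fst_eq; apply: rot_minimal_rot rmin _; rewrite /intercept l_rot.
have W'_neq0 : seq_vec (map fst (X' ++ Y')) != (0, 0).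
  by rewrite W'E; apply: contraNneq XY_neq0 => W0; rewrite -XW W0 /cross !mulr0 subrr.
have head_nc : X' != [::] ->
    ~~ codirected (lf_vec (head e' X').1) (seq_vec (map fst (X' ++ Y'))).
  case: X' {rot_eq s'_lift rmin' W'_neq0} fst_eq W'E => // x X' fst_eq -> _.
  by rewrite -fst_eq in j_nc.
have [k' le'] := rot_insert_le_noncodirected s'_lift rmin' W'_neq0 head_nc.
exists (rot_add (map fst (X ++ e :: Y)) k k').
rewrite -rot_rot_add -map_fst_lift_rot rot_eq (le_trans le') //.
by rewrite e'E fst_eq /intercept !lf_comp_seq_cons l_rot.
Qed.

(* Insert the head of [t] into a rotation-minimal ordering of the rest. *)
Lemma lifted_rot_le_perm s (t : seq (linf R)) : lifted s -> perm_eq (map fst s) t ->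
  exists k, intercept (rot k (map fst s)) <= intercept t.
Proof.
elim: t s => [|g t IH] s s_lift s_t; first by exists 0%N; move/perm_nilP: s_t => ->.
have : g \in map fst s by rewrite (perm_mem s_t) mem_head.
case/mapP=> x xs g_x; rewrite {}g_x in s_t *; case/splitPr: xs s_lift s_t => A B s_lift s_t.
have AB_t : perm_eq (map fst (A ++ B)) t.
  rewrite -(perm_cons x.1); apply: perm_trans s_t.
  by rewrite !map_cat /= -cat1s perm_catCA.
have [k' le'] := IH _ (lifted_cat_cons s_lift) AB_t.
set l := map fst (A ++ B) in le' AB_t *.
have [j j_le j_min] := exists_rot_argmin l.
have rmin : rot_minimal (rot j l) by move=> k; rewrite rot_rot_add j_min.
rewrite /l size_map size_cat in j_le.
have [X [Y [e [i [rot_eq eE fst_eq]]]]] := lift_rot_insert x j_le.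
have s'_lift : lifted (X ++ e :: Y) by rewrite -rot_eq; apply: lifted_lift_rot.
have rmin' : rot_minimal (map fst (X ++ Y)) by rewrite fst_eq.
have [k ins_le] := rot_insert_le s'_lift rmin'.
exists (rot_add (map fst (A ++ x :: B)) i k).
rewrite -rot_rot_add -map_fst_lift_rot rot_eq (le_trans ins_le) // eE fst_eq !intercept_cons.
have rot_t : perm_eq (rot j l) t by rewrite perm_rot.
rewrite (perm_slope_lf_comp_seq rot_t) lerD2l.
exact: le_trans (j_min k') le'.
Qed.

End Insertion.

Section Counterclockwise.
Variable R : realType.
Notation item := (linf R * R)%type.
Implicit Types (x : item) (s : seq item) (l : seq (linf R)).

Lemma sorted_angles_lifted l k : all pos_slope l -> {in l, forall f, lf_vec f != (0, 0)} ->
  sorted <=%R (rot k [seq angle (lf_vec f) | f <- l]) ->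
  exists s, lifted s /\ map fst s = l.
Proof.
move=> l_pos l_vec l_sorted; pose s := [seq (f, angle (lf_vec f)) | f <- rot k l].
have s_lift : lifted s.
  split.
    move=> _ /mapP[f + ->]; rewrite mem_rot => fl.
    by split; [apply: (allP l_pos) | apply/angle_is_arg/l_vec].
  rewrite /s pairwise_map; move: l_sorted; rewrite -map_rot (sorted_pairwise le_trans) pairwise_map.
  apply: (sub_in_pairwise (P := mem l)); last by apply/allP => f; rewrite mem_rot.
  move=> f g fl gl /= fg; rewrite /within_turn /= fg /=.
  have /andP[_ g_lt] := angle_itv (l_vec g gl); have /andP[f_ge _] := angle_itv (l_vec f fl).
  by rewrite mulr2n in g_lt *; lra.
exists (lift_rot (size l - k) s); split; first exact: lifted_lift_rot.
by rewrite map_fst_lift_rot -map_comp map_id -(size_rot k); apply: rotK.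
Qed.

Lemma lifted_rot_minimal x s : lifted (x :: s) ->
  intercept (map fst (x :: s)) <= intercept (rot 1 (map fst (x :: s))) ->
  intercept (map fst (x :: s)) <= intercept (rot (size s) (map fst (x :: s))) ->
  theta x.1 <> theta (lf_comp_seq (map fst (x :: s))) -> rot_minimal (map fst (x :: s)).
Proof.
move=> s_lift rot1 rot_last theta_neq; have [s_ok _] := s_lift.
set l := map fst (x :: s) in rot1 rot_last theta_neq *.
have [W0|W_neq0] := eqVneq (seq_vec l) (0, 0); first exact: rot_minimal_vec0.
have [_ x_arg] := s_ok x (mem_head _ _).
have [psi W_psi /andP[x_le x_gt]] := is_arg_window x.2 (angle_is_arg W_neq0).
have x_lt : x.2 < psi.
  rewrite lt_neqAle x_le andbT; apply/eqP => x_psi; apply: theta_neq.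
  rewrite /theta (negbTE (is_arg_neq0 x_arg)) -/(seq_vec l) (negbTE W_neq0).
  by rewrite (is_arg_angle_eq x_arg (_ : is_arg (seq_vec l) x.2)) // x_psi.
apply: (rot_minimal_near s_lift W_psi).
apply: (lifted_args_near s_lift W_psi); first by rewrite x_lt x_gt.
  by apply: intercept_le_rcons_cross; rewrite -rot1_cons.
have [last_pos _] := s_ok _ (mem_last x s).
have l_rcons : l = rcons (map fst (belast x s)) (last x s).1 by rewrite /l lastI map_rcons.
rewrite l_rcons in rot_last *; apply: intercept_le_cons_cross => //.
by move: rot_last; rewrite -cats1 -(size_belast x s) -(size_map fst) rot_size_cat.
Qed.

Section AngleSorted.
Variables (l : seq (linf R)) (k : nat).
Hypotheses (l_pos : all pos_slope l) (l_vec : {in l, forall f, lf_vec f != (0, 0)}).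
Hypothesis l_sorted : sorted <=%R (rot k [seq angle (lf_vec f) | f <- l]).

Lemma sorted_angles_rot_le_perm t : perm_eq l t -> exists j, intercept (rot j l) <= intercept t.
Proof.
have [s [s_lift <-]] := sorted_angles_lifted l_pos l_vec l_sorted.
exact: lifted_rot_le_perm.
Qed.

Lemma sorted_angles_rot_minimal f l' : l = f :: l' ->
  intercept l <= intercept (rot 1 l) -> intercept l <= intercept (rot (size l') l) ->
  theta f <> theta (lf_comp_seq l) -> rot_minimal l.
Proof.
have [[|x s] [s_lift s_l]] := sorted_angles_lifted l_pos l_vec l_sorted; rewrite -s_l //.
case=> <- <-; rewrite size_map; exact: lifted_rot_minimal.
Qed.

End AngleSorted.

End Counterclockwise.

Section Permutations.
Variables (R : realType) (n : nat) (F : 'I_n -> linf R).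

Definition fseq (s : 'S_n) := [seq F (s i) | i <- enum 'I_n].

Lemma perm_fseq s r : perm_eq (fseq s) (fseq r).
Proof.
suff perm_enum (p : 'S_n) : perm_eq [seq p i | i <- enum 'I_n] (enum 'I_n).
  by rewrite /fseq (map_comp F s) (map_comp F r) perm_map // (permPl (perm_enum s)) perm_sym.
apply: uniq_perm; [by rewrite map_inj_uniq ?enum_uniq //; apply: perm_inj | exact: enum_uniq |].
move=> i; rewrite mem_enum; apply/mapP; exists ((p^-1)%g i); first by rewrite mem_enum.
by rewrite permKV.
Qed.

Lemma size_fseq s : size (fseq s) = n.
Proof. by rewrite size_map size_enum_ord. Qed.

Lemma head_fseq s (i0 : 'I_n) f : nat_of_ord i0 = 0%N -> head f (fseq s) = F (s i0).
Proof. by move=> i0_0; rewrite -nth0 -i0_0 (nth_map i0) ?size_enum_ord // nth_ord_enum. Qed.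

End Permutations.

Unset Implicit Arguments.

Theorem mainTheorem14 (R : realType) (n : nat) (F : 'I_n -> linf R) (s : 'S_n) :
  (forall i, monotone_lf (F i)) ->
  (forall i, ~ identical_lf (F i)) ->
  counterclockwise F s ->
  lf_le (fperm F s) (fshift F s 1) ->
  lf_le (fperm F s) (fshift F s n.-1) ->
  (forall i0 : 'I_n, nat_of_ord i0 = 0%N -> theta (F (s i0)) <> theta (fperm F s)) ->
  is_minimum F s.
Proof.
move=> F_mono F_nid [k _ ccw] /lf_le_intercept le_rot1 /lf_le_intercept le_rotn theta_neq r.
rewrite /is_minimum /fperm /fshift -!/(fseq F _) in le_rot1 le_rotn theta_neq *.
have l_pos : all pos_slope (fseq F s) by apply/allP => f /mapP[i _ ->]; apply: F_mono.
have l_vec : {in fseq F s, forall f, lf_vec f != (0, 0)}.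
  by move=> f /mapP[i _ ->]; apply: lf_vec_neq0.
have l_sorted : sorted <=%R (rot k [seq angle (lf_vec f) | f <- fseq F s]) by rewrite -map_comp.
apply: intercept_le_lf_le (perm_fseq F s r) _.
have [j le_j] := sorted_angles_rot_le_perm l_pos l_vec l_sorted (perm_fseq F s r).
apply: le_trans le_j; case E : (fseq F s) => [|f l]; first by rewrite rot_oversize.
have n_gt0 : (0 < n)%N by rewrite -(size_fseq F s) E.
rewrite -E; apply: (sorted_angles_rot_minimal l_pos l_vec l_sorted E) => //.
  by rewrite E /= -[size l]/(size (f :: l)).-1 -E size_fseq.
have -> : f = F (s (Ordinal n_gt0)) by rewrite -(head_fseq F s f) ?E.
exact: theta_neq.
Qed.
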